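(* Let $n\ge1$, let $p_1,\dots,p_n:[0,\infty)\to\mathbb C$ be continuous, and for $k=1,\dots,n$ let $$F_k(c,t)=-\sum_{m=1}^{k}e^{-mt}p_m(t)\,[z^{k-m}]\Bigl(1+\sum_{i\ge1}c_iz^i\Bigr)^{m+1},$$ where $[z^r]$ denotes the coefficient of $z^r$ (so $F_k$ is a polynomial in $c_1,\dots,c_{k-1}$; e.g. $F_1=-e^{-t}p_1$, $F_2=-2e^{-t}p_1c_1-e^{-2t}p_2$, $F_3=-e^{-t}p_1(2c_2+c_1^2)-3e^{-2t}p_2c_1-e^{-3t}p_3$). Put $H(c,\bar\psi,t)=\sum_{k=1}^n\bar\psi_kF_k(c,t)$, and let $(c(t),\bar\psi(t))$ be a $C^1$ solution of $$\dot c_k=F_k(c,t),\qquad \dot{\bar\psi}_k=-\frac{\partial H}{\partial c_k},\qquad k=1,\dots,n$$ (where $\bar\psi_k$ are treated as independent complex variables; note $\dot{\bar\psi}_n=0$). Then the functions $$L_j=\sum_{k=j}^{n}(k-j+1)\,c_{k-j}\,\bar\psi_k,\qquad j=1,\dots,n\quad(c_0:=1),$$ i.e. $L_1=\bar\psi_1+2c_1\bar\psi_2+\dots+nc_{n-1}\bar\psi_n$, $L_2=\bar\psi_2+2c_1\bar\psi_3+\dots+(n-1)c_{n-2}\bar\psi_n$, …, $L_n=\bar\psi_n$, are constant in $t$. They are linearly independent in $\bar\psi$, so the system is partially integrable.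
   Context: This system is the coefficient form of the Löwner–Kufarev equation $dw/dt=-wp(w,t)$, $w(z,0)=z$, $p(w,t)=1+\sum_k p_k(t)w^k$, with $w(z,t)=e^{-t}z(1+\sum_k c_k(t)z^k)$; positivity of $\operatorname{Re}p$ is not needed for the claim. *)

From Stdlib Require Import Reals Arith.
From Coquelicot Require Import Coquelicot.
Open Scope R_scope.

(* Coefficient sequence of the series 1 + sum_{i>=1} c_i z^i  (so c_0 := 1). *)
Definition ser (c : nat -> C) (i : nat) : C :=
  match i with O => RtoC 1 | S _ => c i end.

(* coef_pow c m r = [z^r] (1 + sum_{i>=1} c_i z^i)^m, computed by the
   Cauchy product: (s^(m+1))_r = sum_{i=0}^r s_i (s^m)_{r-i}. *)
Fixpoint coef_pow (c : nat -> C) (m r : nat) : C :=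
  match m with
  | O => if Nat.eqb r 0 then RtoC 1 else RtoC 0
  | S m' => sum_n_m (fun i => (ser c i * coef_pow c m' (r - i))%C) 0 r
  end.

Definition Fk (p : nat -> R -> C) (k : nat) (c : nat -> C) (t : R) : C :=
  (- sum_n_m (fun m => (RtoC (exp (- INR m * t)) * p m t
                         * coef_pow c (S m) (k - m))%C) 1 k)%C.

Definition Ham (n : nat) (p : nat -> R -> C) (c psi : nat -> C) (t : R) : C :=
  sum_n_m (fun k => (psi k * Fk p k c t)%C) 1 n.

Definition upd (c : nat -> C) (k : nat) (z : C) : nat -> C :=
  fun i => if Nat.eqb i k then z else c i.

Definition Lj (n j : nat) (c psi : nat -> C) : C :=
  sum_n_m (fun k => (RtoC (INR (k - j + 1)) * ser c (k - j) * psi k)%C) j n.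

Definition cont_on_nonneg (f : R -> C) : Prop :=
  forall t, 0 <= t ->
    filterlim f (within (fun u => 0 <= u) (locally t)) (locally (f t)).

(* The Loewner-Kufarev equation [dw/dt = - w p(w,t)] acts on [w] by left
   composition, so it commutes with the right compositions
   [w -> w o (z + eps z^(j+1))].  On the coefficients [c] this symmetry is the
   vector field [gen j] with components [(k-j+1) c_(k-j)], and the commutation
   [[gen j, F] = 0] reduces to the power-series identity
   [z (s^(m+1))' = (m+1) s^m (z s')] for [s = 1 + sum c_i z^i].  By Noether's
   theorem the momentum [L_j = sum_k (gen j c)_k psi_k] is then conserved: along
   the Hamiltonian flow its derivative is
   [sum_i psi_i (F.grad (gen j c)_i - gen j c.grad F_i) = 0].  Constancy on
   [0, +oo) follows from the mean value theorem and continuity at 0. *)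

From Stdlib Require Import Reals Lia Lra FunctionalExtensionality.
From Coquelicot Require Import Coquelicot.
Open Scope R_scope.

Local Open Scope C_scope.

Local Notation is_C_derive f z l := (@is_derive C_AbsRing C_NormedModule f z l).
Local Notation is_derive_RC f t l := (@is_derive R_AbsRing C_R_NormedModule f t l).

(* [ring] for goals in [C] whose type is displayed as a Coquelicot carrier. *)
Ltac Cring := match goal with |- @eq _ ?a ?b => change (@eq C a b) end; ring.

Section ComplexSums.

Implicit Types (f g : nat -> C) (a b : nat).

Lemma sumC_plus f g a b :
  sum_n_m (fun k => f k + g k) a b = sum_n_m f a b + sum_n_m g a b.
Proof. exact (sum_n_m_plus f g a b). Qed.

Lemma sumC_mult_l (x : C) f a b :
  sum_n_m (fun k => x * f k) a b = x * sum_n_m f a b.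
Proof. exact (sum_n_m_mult_l x f a b). Qed.

Lemma sumC_mult_r (x : C) f a b :
  sum_n_m (fun k => f k * x) a b = sum_n_m f a b * x.
Proof. exact (sum_n_m_mult_r x f a b). Qed.

Lemma sumC_empty f a b : (b < a)%nat -> sum_n_m f a b = RtoC 0.
Proof. exact (sum_n_m_zero f a b). Qed.

Lemma sumC_Sm f a b : (a <= S b)%nat -> sum_n_m f a (S b) = sum_n_m f a b + f (S b).
Proof. exact (sum_n_Sm f a b). Qed.

Lemma sumC_Sn f a b : (a <= b)%nat -> sum_n_m f a b = f a + sum_n_m f (S a) b.
Proof. exact (sum_Sn_m f a b). Qed.

Lemma sumC_Chasles f a m b : (a <= S m)%nat -> (m <= b)%nat ->
  sum_n_m f a b = sum_n_m f a m + sum_n_m f (S m) b.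
Proof. exact (sum_n_m_Chasles f a m b). Qed.

Lemma sumC_zero f a b : (forall k, (a <= k <= b)%nat -> f k = 0) -> sum_n_m f a b = RtoC 0.
Proof.
  intros Hf. rewrite (sum_n_m_ext_loc f (fun _ => RtoC 0)) by exact Hf.
  exact (sum_n_m_const_zero a b).
Qed.

Lemma sumC_opp f a b : sum_n_m (fun k => - f k) a b = - sum_n_m f a b.
Proof.
  rewrite (sum_n_m_ext_loc _ (fun k => - RtoC 1 * f k)) by (intros; Cring).
  rewrite sumC_mult_l. Cring.
Qed.

Lemma sumC_shift f d a b :
  sum_n_m f (a + d) (b + d) = sum_n_m (fun i => f (i + d)%nat) a b.
Proof.
  induction d as [|d IH] in f |- *.
  - rewrite !Nat.add_0_r. apply sum_n_m_ext_loc. intros. f_equal. lia.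
  - rewrite <- !plus_n_Sm, <- sum_n_m_S, IH.
    apply sum_n_m_ext_loc. intros. f_equal. lia.
Qed.

Lemma sumC_swap (f : nat -> nat -> C) a1 b1 a2 b2 :
  sum_n_m (fun i => sum_n_m (fun m => f i m) a2 b2) a1 b1
  = sum_n_m (fun m => sum_n_m (fun i => f i m) a1 b1) a2 b2.
Proof.
  destruct (Nat.lt_ge_cases b1 a1) as [Hlt|Hge].
  { rewrite sumC_empty by exact Hlt. symmetry.
    apply sumC_zero. intros. apply sumC_empty, Hlt. }
  induction b1 as [|b IH].
  - assert (a1 = 0)%nat by lia. subst. rewrite sum_n_n.
    apply sum_n_m_ext_loc. intros. now rewrite sum_n_n.
  - destruct (Nat.eq_dec a1 (S b)) as [->|Hne].
    + rewrite sum_n_n. apply sum_n_m_ext_loc. intros. now rewrite sum_n_n.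
    + rewrite sumC_Sm, IH, <- sumC_plus by lia.
      apply sum_n_m_ext_loc. intros. rewrite sumC_Sm by lia. reflexivity.
Qed.

Lemma sumC_triangle (X : nat -> nat -> C) r :
  sum_n_m (fun k => sum_n_m (fun i => X i k) 0 k) 0 r
  = sum_n_m (fun i => sum_n_m (fun k => X i k) i r) 0 r.
Proof.
  induction r as [|r IH].
  - now rewrite !sum_n_n.
  - rewrite sumC_Sm, IH by lia.
    transitivity (sum_n_m (fun i => sum_n_m (fun k => X i k) i r + X i (S r)) 0 (S r)).
    + rewrite sumC_plus, (sumC_Sm (fun i => sum_n_m _ i r)) by lia.
      rewrite (sumC_empty _ (S r) r) by lia. Cring.
    + apply sum_n_m_ext_loc. intros k Hk. rewrite (sumC_Sm _ k r) by lia. reflexivity.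
Qed.

Lemma sumC_rev f r : sum_n_m f 0 r = sum_n_m (fun i => f (r - i)%nat) 0 r.
Proof.
  induction r as [|r IH] in f |- *.
  - now rewrite !sum_n_n.
  - rewrite sumC_Sn, <- sum_n_m_S, IH, (sumC_Sm _ 0 r), Nat.sub_diag, Cplus_comm by lia.
    f_equal. apply sum_n_m_ext_loc. intros. f_equal. lia.
Qed.

Lemma sumC_indicator (g : nat -> C) k r :
  sum_n_m (fun i => (if Nat.eqb i k then RtoC 1 else RtoC 0) * g i) 0 r
  = if Nat.leb k r then g k else RtoC 0.
Proof.
  induction r as [|r IH].
  - rewrite sum_n_n. destruct k; simpl; Cring.
  - rewrite sumC_Sm, IH by lia.
    destruct (Nat.leb_spec k r), (Nat.leb_spec k (S r)), (Nat.eqb_spec (S r) k);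
      subst; try lia; Cring.
Qed.

Lemma sumC_truncate (h X : nat -> C) k r : (k <= r)%nat ->
  sum_n_m (fun i => h i * (if Nat.leb k (r - i) then X (r - i - k)%nat else RtoC 0)) 0 r
  = sum_n_m (fun i => h i * X (r - k - i)%nat) 0 (r - k).
Proof.
  intros Hkr. rewrite (sumC_Chasles _ 0 (r - k) r) by lia. rewrite (sumC_zero _ (S (r - k)) r).
  - rewrite Cplus_0_r. apply sum_n_m_ext_loc. intros i Hi.
    destruct (Nat.leb_spec k (r - i)); [|lia]. do 2 f_equal. lia.
  - intros i Hi. destruct (Nat.leb_spec k (r - i)); [lia|Cring].
Qed.

End ComplexSums.

Section CauchyProduct.

Definition conv (f g : nat -> C) (r : nat) : C :=
  sum_n_m (fun i => f i * g (r - i)%nat) 0 r.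

Definition delta (r : nat) : C := if Nat.eqb r 0 then RtoC 1 else RtoC 0.

(* The Euler operator [z d/dz] on coefficient sequences. *)
Definition euler (f : nat -> C) (r : nat) : C := RtoC (INR r) * f r.

Implicit Types (f g h : nat -> C).

Lemma conv_ext f g f' g' r :
  (forall i, f i = f' i) -> (forall i, g i = g' i) -> conv f g r = conv f' g' r.
Proof. intros Hf Hg. apply sum_n_m_ext_loc. intros. now rewrite Hf, Hg. Qed.

Lemma conv_comm f g r : conv f g r = conv g f r.
Proof.
  unfold conv. rewrite sumC_rev. apply sum_n_m_ext_loc. intros.
  rewrite Cmult_comm. do 2 f_equal. lia.
Qed.

Lemma conv_assoc f g h r : conv (conv f g) h r = conv f (conv g h) r.
Proof.
  unfold conv.
  transitivity (sum_n_m (fun k =>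
    sum_n_m (fun i => f i * g (k - i)%nat * h (r - k)%nat) 0 k) 0 r).
  { apply sum_n_m_ext_loc. intros. now rewrite <- sumC_mult_r. }
  rewrite sumC_triangle. apply sum_n_m_ext_loc. intros i Hi.
  rewrite <- sumC_mult_l.
  replace i with (0 + i)%nat at 1 by lia. replace r with ((r - i) + i)%nat at 1 by lia.
  rewrite sumC_shift. apply sum_n_m_ext_loc. intros l Hl.
  replace (l + i - i)%nat with l by lia. replace (r - (l + i))%nat with (r - i - l)%nat by lia.
  Cring.
Qed.

Lemma conv_delta_r f r : conv f delta r = f r.
Proof.
  unfold conv, delta. destruct r as [|r].
  - rewrite sum_n_n. simpl. Cring.
  - rewrite sumC_Sm by lia. rewrite Nat.sub_diag, sumC_zero.
    + simpl. Cring.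
    + intros k Hk. destruct (Nat.eqb_spec (S r - k) 0); [lia|Cring].
Qed.

Lemma conv_delta_l f r : conv delta f r = f r.
Proof. rewrite conv_comm. apply conv_delta_r. Qed.

Lemma conv_plus_r f g h r : conv f (fun i => g i + h i) r = conv f g r + conv f h r.
Proof. unfold conv. rewrite <- sumC_plus. apply sum_n_m_ext_loc. intros. Cring. Qed.

Lemma conv_scal_r f g x r : conv f (fun i => x * g i) r = x * conv f g r.
Proof. unfold conv. rewrite <- sumC_mult_l. apply sum_n_m_ext_loc. intros. Cring. Qed.

Lemma euler_conv f g r : euler (conv f g) r = conv (euler f) g r + conv f (euler g) r.
Proof.
  unfold euler, conv. rewrite <- sumC_mult_l, <- sumC_plus.
  apply sum_n_m_ext_loc. intros i Hi.
  rewrite minus_INR, RtoC_minus by lia. Cring.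
Qed.

End CauchyProduct.

Section PowerCoefficients.

Variable c : nat -> C.

Lemma coef_pow_S m : coef_pow c (S m) = conv (ser c) (coef_pow c m).
Proof. reflexivity. Qed.

Lemma euler_coef_pow m r :
  euler (coef_pow c (S m)) r = RtoC (INR (S m)) * conv (coef_pow c m) (euler (ser c)) r.
Proof.
  induction m as [|m IH] in r |- *.
  - unfold euler. rewrite coef_pow_S.
    rewrite (conv_ext _ _ (ser c) delta), conv_delta_r by reflexivity.
    rewrite (conv_ext _ _ delta (euler (ser c))), conv_delta_l by reflexivity.
    unfold euler. simpl. Cring.
  - rewrite coef_pow_S, euler_conv.
    rewrite (conv_ext (ser c) (euler (coef_pow c (S m))) (ser c)
      (fun i => RtoC (INR (S m)) * conv (coef_pow c m) (euler (ser c)) i)) by auto.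
    rewrite conv_scal_r, <- conv_assoc.
    rewrite (conv_ext (conv (ser c) (coef_pow c m)) _ (coef_pow c (S m)) (euler (ser c)))
      by reflexivity.
    rewrite conv_comm, !S_INR, !RtoC_plus. Cring.
Qed.

(* The sequence [(l+1) s_l] is the coefficient sequence of [(z s)']. *)
Lemma coef_pow_weighted m r :
  RtoC (INR (r + m + 1)) * coef_pow c (S m) r
  = RtoC (INR (m + 1)) * conv (fun l => RtoC (INR (l + 1)) * ser c l) (coef_pow c m) r.
Proof.
  rewrite <- Nat.add_assoc, plus_INR, RtoC_plus, Cmult_plus_distr_r.
  change (RtoC (INR r) * coef_pow c (S m) r) with (euler (coef_pow c (S m)) r).
  rewrite euler_coef_pow, coef_pow_S, (conv_comm (ser c)), (conv_comm (fun l => _ * _)).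
  rewrite (conv_ext (coef_pow c m) (fun l => RtoC (INR (l + 1)) * ser c l) (coef_pow c m)
            (fun l => euler (ser c) l + ser c l)).
  2, 3: intros; unfold euler; rewrite ?plus_INR, ?RtoC_plus; simpl; Cring.
  rewrite conv_plus_r, <- Nat.add_1_r, !plus_INR, !RtoC_plus. Cring.
Qed.

End PowerCoefficients.

Section DerivativeOfSums.

Context {K : AbsRing} {V : NormedModule K}.

Lemma is_derive_sum_n_m (f : nat -> K -> V) (d : nat -> V) x a b :
  (forall i, (a <= i <= b)%nat -> is_derive (f i) x (d i)) ->
  is_derive (fun y => sum_n_m (fun i => f i y) a b) x (sum_n_m d a b).
Proof.
  intros Hd. destruct (Nat.lt_ge_cases b a) as [Hlt|Hge].
  { rewrite sum_n_m_zero by exact Hlt.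
    apply (is_derive_ext (fun _ => zero)); [intros; now rewrite sum_n_m_zero|].
    apply is_derive_const. }
  induction b as [|b IH].
  - assert (a = 0)%nat by lia. subst. rewrite sum_n_n.
    apply (is_derive_ext (f 0%nat)); [intros; now rewrite sum_n_n|]. apply Hd. lia.
  - destruct (Nat.eq_dec a (S b)) as [->|Hne].
    + rewrite sum_n_n. apply (is_derive_ext (f (S b))); [intros; now rewrite sum_n_n|].
      apply Hd. lia.
    + rewrite sum_n_Sm by lia.
      apply (is_derive_ext (fun y => plus (sum_n_m (fun i => f i y) a b) (f (S b) y))).
      { intros. now rewrite sum_n_Sm by lia. }
      apply is_derive_plus; [apply IH|apply Hd]; intros; try apply Hd; lia.
Qed.

End DerivativeOfSums.

Section ComplexDerivatives.

(* The same statement over two normed-module structures on [C] with equal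
   operations and norms (but different uniformities), hence the same proof. *)
Lemma is_C_derive_AbsRing (f : C -> C) z l :
  @is_derive C_AbsRing (AbsRing_NormedModule C_AbsRing) f z l <-> is_C_derive f z l.
Proof.
  split; intros [[Hp Hs Hl] Hd]; (split; [split|]); assumption.
Qed.

Lemma is_C_derive_mult (f g : C -> C) z a b :
  is_C_derive f z a -> is_C_derive g z b ->
  is_C_derive (fun x => f x * g x) z (a * g z + f z * b).
Proof.
  intros Ha%is_C_derive_AbsRing Hb%is_C_derive_AbsRing.
  apply is_C_derive_AbsRing, (is_derive_mult f g z a b Ha Hb Cmult_comm).
Qed.

Lemma is_C_derive_scal (x : C) (f : C -> C) z l :
  is_C_derive f z l -> is_C_derive (fun y => x * f y) z (x * l).
Proof.
  intros Hf. replace (x * l) with (RtoC 0 * f z + x * l) by Cring.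
  exact (is_C_derive_mult _ _ z _ _ (is_derive_const x z) Hf).
Qed.

Lemma is_C_derive_id z : is_C_derive (fun x => x) z (RtoC 1).
Proof. exact (proj1 (is_C_derive_AbsRing (fun x => x) z (RtoC 1)) (is_derive_id z)). Qed.

End ComplexDerivatives.

Section HamiltonianDerivative.

Variables (c : nat -> C) (k : nat).
Hypothesis Hk : (1 <= k)%nat.

Lemma is_C_derive_ser_upd i z0 :
  is_C_derive (fun z => ser (upd c k z) i) z0 (if Nat.eqb i k then RtoC 1 else RtoC 0).
Proof.
  destruct i as [|i].
  - destruct k; [lia|]. exact (is_derive_const (RtoC 1) z0).
  - unfold ser, upd. destruct (Nat.eqb (S i) k).
    + apply is_C_derive_id.
    + exact (is_derive_const (c (S i)) z0).
Qed.

Lemma is_C_derive_coef_pow m r z0 :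
  is_C_derive (fun z => coef_pow (upd c k z) m r) z0
    (if Nat.leb k r then RtoC (INR m) * coef_pow (upd c k z0) (m - 1) (r - k) else RtoC 0).
Proof.
  induction m as [|m IH] in r |- *.
  - replace (if Nat.leb k r then _ else _) with (RtoC 0)
      by (destruct (Nat.leb k r); simpl; Cring).
    apply (is_derive_const (coef_pow c 0 r)).
  - set (c0 := upd c k z0).
    eapply is_derive_ext; [reflexivity|].
    replace (if Nat.leb k r then _ else _) with
      (sum_n_m (fun i => (if Nat.eqb i k then RtoC 1 else RtoC 0) * coef_pow c0 m (r - i)
         + ser c0 i * (if Nat.leb k (r - i)
                       then RtoC (INR m) * coef_pow c0 (m - 1) (r - i - k) else RtoC 0)) 0 r).
    { apply (@is_derive_sum_n_m C_AbsRing C_NormedModule). intros i _.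
      apply is_C_derive_mult; [apply is_C_derive_ser_upd|apply IH]. }
    rewrite sumC_plus, sumC_indicator.
    destruct (Nat.leb_spec k r) as [Hkr|Hkr].
    + rewrite (sumC_truncate (ser c0) (fun l => RtoC (INR m) * coef_pow c0 (m - 1) l) k r Hkr).
      destruct m as [|m].
      * rewrite sumC_zero by (intros; simpl; Cring). simpl. Cring.
      * rewrite (sum_n_m_ext_loc _
          (fun i => RtoC (INR (S m)) * (ser c0 i * coef_pow c0 m (r - k - i)))) by
          (intros; rewrite Nat.sub_succ, Nat.sub_0_r; Cring).
        rewrite sumC_mult_l, Nat.sub_succ, Nat.sub_0_r, (S_INR (S m)), RtoC_plus.
        change (sum_n_m _ 0 (r - k)) with (coef_pow c0 (S m) (r - k)). Cring.
    + rewrite sumC_zero; [Cring|].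
      intros i Hi. destruct (Nat.leb_spec k (r - i)); [lia|Cring].
Qed.

End HamiltonianDerivative.

Section HamiltonianGradient.

Variables (p : nat -> R -> C) (t : R).

Definition weight (m : nat) : C := RtoC (exp (- INR m * t)) * p m t.

(* [dFk i k c = dF_k/dc_i] and [dHam n i c psi = dH/dc_i]. *)
Definition dFk (i k : nat) (c : nat -> C) : C :=
  - sum_n_m (fun m => weight m * (if Nat.leb i (k - m)
      then RtoC (INR (S m)) * coef_pow c m (k - m - i) else RtoC 0)) 1 k.

Definition dHam (n i : nat) (c psi : nat -> C) : C :=
  sum_n_m (fun k => psi k * dFk i k c) 1 n.

Lemma is_C_derive_Ham n c psi i z0 : (1 <= i)%nat ->
  is_C_derive (fun z => Ham n p (upd c i z) psi t) z0 (dHam n i (upd c i z0) psi).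
Proof.
  intros Hi. apply (@is_derive_sum_n_m C_AbsRing C_NormedModule). intros k _.
  apply is_C_derive_scal. unfold Fk, dFk.
  apply (@is_derive_opp C_AbsRing C_NormedModule).
  apply (@is_derive_sum_n_m C_AbsRing C_NormedModule).
  intros m _. apply is_C_derive_scal.
  pose proof (is_C_derive_coef_pow c i Hi (S m) (k - m) z0) as Hd.
  rewrite Nat.sub_succ, Nat.sub_0_r in Hd. exact Hd.
Qed.

End HamiltonianGradient.

(* First-order change of the coefficients [c_k] of [w = z s(z)] under
   [z -> z + eps z^(j+1)], as [z^(j+1) (z s)' = sum_k (k-j+1) s_(k-j) z^(k+1)]. *)
Definition gen (j : nat) (c : nat -> C) (k : nat) : C :=
  RtoC (INR (k - j + 1)) * ser c (k - j).

Lemma Fk_O (p : nat -> R -> C) (c : nat -> C) (t : R) : Fk p 0 c t = RtoC 0.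
Proof. unfold Fk. rewrite sumC_empty by lia. Cring. Qed.

Section Commutation.

Variables (p : nat -> R -> C) (t : R) (c : nat -> C) (j n : nat).
Hypothesis Hj : (1 <= j)%nat.

Lemma sum_gen_dcoef m k : (k <= n)%nat ->
  sum_n_m (fun i => gen j c i *
     (if Nat.leb i (k - m) then RtoC (INR (S m)) * coef_pow c m (k - m - i) else RtoC 0)) j n
  = if Nat.leb (j + m) k then RtoC (INR (k - j + 1)) * coef_pow c (S m) (k - j - m)
    else RtoC 0.
Proof.
  intros Hkn. destruct (Nat.leb_spec (j + m) k) as [Hle|Hgt].
  - rewrite (sumC_Chasles _ j (k - m) n) by lia. rewrite (sumC_zero _ (S (k - m)) n).
    2: { intros i Hi. destruct (Nat.leb_spec i (k - m)); [lia|Cring]. }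
    rewrite Cplus_0_r.
    replace j with (0 + j)%nat at 1 by lia.
    replace (k - m)%nat with ((k - j - m) + j)%nat at 1 by lia.
    rewrite sumC_shift.
    rewrite (sum_n_m_ext_loc _ (fun l => RtoC (INR (m + 1))
      * (RtoC (INR (l + 1)) * ser c l * coef_pow c m (k - j - m - l)))).
    2: { intros l Hl. destruct (Nat.leb_spec (l + j) (k - m)); [|lia].
         unfold gen. rewrite Nat.add_sub.
         replace (INR (S m)) with (INR (m + 1)) by (f_equal; lia).
         replace (k - m - (l + j))%nat with (k - j - m - l)%nat by lia. Cring. }
    rewrite sumC_mult_l.
    change (sum_n_m _ 0 _) with
      (conv (fun l => RtoC (INR (l + 1)) * ser c l) (coef_pow c m) (k - j - m)).
    rewrite <- coef_pow_weighted. do 3 f_equal. lia.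
  - apply sumC_zero. intros i Hi. destruct (Nat.leb_spec i (k - m)); [lia|Cring].
Qed.

(* [[gen j, F] = 0], componentwise. *)
Lemma gen_dFk k : (k <= n)%nat ->
  RtoC (INR (k - j + 1)) * Fk p (k - j) c t
  = sum_n_m (fun i => gen j c i * dFk p t i k c) j n.
Proof.
  intros Hkn. unfold dFk.
  rewrite (sum_n_m_ext_loc _ (fun i => - sum_n_m (fun m => weight p t m * (gen j c i *
     (if Nat.leb i (k - m) then RtoC (INR (S m)) * coef_pow c m (k - m - i)
      else RtoC 0))) 1 k)).
  2: { intros i _. rewrite <- sumC_opp, <- sumC_mult_l, <- sumC_opp.
       apply sum_n_m_ext_loc. intros. Cring. }
  rewrite sumC_opp, sumC_swap.
  rewrite (sum_n_m_ext_loc _ (fun m => weight p t m * (if Nat.leb (j + m) k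
     then RtoC (INR (k - j + 1)) * coef_pow c (S m) (k - j - m) else RtoC 0))).
  2: { intros m Hm. rewrite sumC_mult_l, sum_gen_dcoef by lia. reflexivity. }
  rewrite (sumC_Chasles _ 1 (k - j) k) by lia. rewrite (sumC_zero _ (S (k - j)) k).
  2: { intros m Hm. destruct (Nat.leb_spec (j + m) k); [lia|Cring]. }
  unfold Fk. rewrite Cplus_0_r, <- !sumC_opp, <- sumC_mult_l.
  apply sum_n_m_ext_loc. intros m Hm.
  destruct (Nat.leb_spec (j + m) k); [|lia]. unfold weight. Cring.
Qed.

Lemma sum_gen_dHam psi : (j <= n)%nat ->
  sum_n_m (fun k => RtoC (INR (k - j + 1)) * Fk p (k - j) c t * psi k) j n
  = sum_n_m (fun k => gen j c k * dHam p t n k c psi) j n.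
Proof.
  intros Hjn. unfold dHam.
  rewrite (sum_n_m_ext_loc (fun k => gen j c k * _)
     (fun k => sum_n_m (fun k' => psi k' * (gen j c k * dFk p t k k' c)) 1 n)).
  2: { intros. rewrite <- sumC_mult_l. apply sum_n_m_ext_loc. intros. Cring. }
  rewrite sumC_swap, (sumC_Chasles _ 1 (j - 1) n), Nat.sub_1_r, Nat.succ_pred by lia.
  rewrite (sumC_zero _ 1 (Nat.pred j)).
  2: { intros k Hk. rewrite sumC_mult_l, <- gen_dFk by lia.
       replace (k - j)%nat with 0%nat by lia. rewrite Fk_O. Cring. }
  rewrite Cplus_0_l. apply sum_n_m_ext_loc. intros k Hk.
  rewrite sumC_mult_l, <- gen_dFk by lia. Cring.
Qed.

End Commutation.

Local Close Scope C_scope.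

Section ComplexValuedFunctions.

Lemma C_R_decompose (z : C_R_NormedModule) :
  plus (scal (fst z) (RtoC 1)) (scal (snd z) (0, 1)) = z.
Proof.
  destruct z as [a b]. unfold plus, scal. simpl. unfold prod_plus, prod_scal. simpl.
  change ((a * 1 + b * 0, a * 0 + b * 1) = (a, b)). apply f_equal2; ring.
Qed.

Lemma is_derive_RC_components (f : R -> C) t l :
  is_derive_RC f t l <->
  is_derive (fun u => fst (f u)) t (fst l) /\ is_derive (fun u => snd (f u)) t (snd l).
Proof.
  split.
  - intros Hf. split; eapply filterdiff_ext_lin.
    + apply (@filterdiff_comp R_AbsRing R_NormedModule C_R_NormedModule R_NormedModule
               _ _ f fst _ fst Hf), filterdiff_linear.
      apply (@is_linear_fst R_AbsRing R_NormedModule R_NormedModule).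
    + reflexivity.
    + apply (@filterdiff_comp R_AbsRing R_NormedModule C_R_NormedModule R_NormedModule
               _ _ f snd _ snd Hf), filterdiff_linear.
      apply (@is_linear_snd R_AbsRing R_NormedModule R_NormedModule).
    + reflexivity.
  - intros [H1 H2].
    pose proof (@is_derive_scal_l R_AbsRing C_R_NormedModule _ t _ (RtoC 1) H1) as Hre.
    pose proof (@is_derive_scal_l R_AbsRing C_R_NormedModule _ t _ (0, 1) H2) as Him.
    pose proof (is_derive_plus _ _ t _ _ Hre Him) as Hsum.
    rewrite C_R_decompose in Hsum.
    exact (is_derive_ext _ f t l (fun u => C_R_decompose (f u)) Hsum).
Qed.

Ltac derive_value_by Hd :=
  lazymatch type of Hd with is_derive _ _ ?l =>
  lazymatch goal with |- is_derive _ _ ?l0 => replace l0 with l; [exact Hd|] end end.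

Lemma is_derive_RC_mult (f g : R -> C) t a b :
  is_derive_RC f t a -> is_derive_RC g t b ->
  is_derive_RC (fun u => (f u * g u)%C) t (a * g t + f t * b)%C.
Proof.
  intros [F1 F2]%is_derive_RC_components [G1 G2]%is_derive_RC_components.
  apply is_derive_RC_components. split.
  - apply (is_derive_ext (fun u => minus (fst (f u) * fst (g u)) (snd (f u) * snd (g u)))).
    { reflexivity. }
    pose proof (is_derive_minus _ _ t _ _
      (Derive.is_derive_mult _ _ t _ _ F1 G1) (Derive.is_derive_mult _ _ t _ _ F2 G2)) as Hd.
    derive_value_by Hd. unfold minus, plus, opp. simpl. ring.
  - apply (is_derive_ext (fun u => plus (fst (f u) * snd (g u)) (snd (f u) * fst (g u)))).
    { reflexivity. }
    pose proof (is_derive_plus _ _ t _ _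
      (Derive.is_derive_mult _ _ t _ _ F1 G2) (Derive.is_derive_mult _ _ t _ _ F2 G1)) as Hd.
    derive_value_by Hd. unfold plus. simpl. ring.
Qed.

End ComplexValuedFunctions.

Section Limits.

Context {T : Type} {F : (T -> Prop) -> Prop} {FF : Filter F}.

Lemma filterlim_sum_n_m {K : AbsRing} {V : NormedModule K}
  (f : nat -> T -> V) (l : nat -> V) a b :
  (forall i, (a <= i <= b)%nat -> filterlim (f i) F (locally (l i))) ->
  filterlim (fun x => sum_n_m (fun i => f i x) a b) F (locally (sum_n_m l a b)).
Proof.
  intros Hl. destruct (Nat.lt_ge_cases b a) as [Hlt|Hge].
  { rewrite sum_n_m_zero by exact Hlt.
    apply (filterlim_ext (fun _ => zero)); [intros; now rewrite sum_n_m_zero|].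
    apply filterlim_const. }
  induction b as [|b IH].
  - assert (a = 0)%nat by lia. subst. rewrite sum_n_n.
    apply (filterlim_ext (f 0%nat)); [intros; now rewrite sum_n_n|]. apply Hl. lia.
  - destruct (Nat.eq_dec a (S b)) as [->|Hne].
    + rewrite sum_n_n. apply (filterlim_ext (f (S b))); [intros; now rewrite sum_n_n|].
      apply Hl. lia.
    + rewrite sum_n_Sm by lia.
      apply (filterlim_ext (fun x => plus (sum_n_m (fun i => f i x) a b) (f (S b) x))).
      { intros. now rewrite sum_n_Sm by lia. }
      eapply filterlim_comp_2; [apply IH|apply Hl|apply filterlim_plus]; intros;
        try apply Hl; lia.
Qed.

Lemma filterlim_C_components (f : T -> C) l :
  filterlim f F (locally l) <->
  filterlim (fun x => fst (f x)) F (locally (fst l))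
  /\ filterlim (fun x => snd (f x)) F (locally (snd l)).
Proof.
  rewrite !filterlim_locally. split.
  - intros H. split; intros eps; generalize (H eps); apply filter_imp;
      intros x [Hx1 Hx2]; assumption.
  - intros [H1 H2] eps. generalize (filter_and _ _ (H1 eps) (H2 eps)).
    apply filter_imp. intros x Hx. exact Hx.
Qed.

Lemma filterlim_Cmult (f g : T -> C) a b :
  filterlim f F (locally a) -> filterlim g F (locally b) ->
  filterlim (fun x => (f x * g x)%C) F (locally (a * b)%C).
Proof.
  intros [F1 F2]%filterlim_C_components [G1 G2]%filterlim_C_components.
  assert (Hmult : forall (u v : T -> R) x y, filterlim u F (locally x) ->
    filterlim v F (locally y) -> filterlim (fun z => u z * v z) F (locally (x * y))).
  { intros u v x y Hu Hv. eapply filterlim_comp_2; [exact Hu|exact Hv|].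
    apply (@filterlim_mult R_AbsRing). }
  assert (Hplus : forall (u v : T -> R) x y, filterlim u F (locally x) ->
    filterlim v F (locally y) -> filterlim (fun z => u z + v z) F (locally (x + y))).
  { intros u v x y Hu Hv. eapply filterlim_comp_2; [exact Hu|exact Hv|].
    apply (@filterlim_plus R_AbsRing R_NormedModule). }
  assert (Hopp : forall (u : T -> R) x, filterlim u F (locally x) ->
    filterlim (fun z => - u z) F (locally (- x))).
  { intros u x Hu. eapply filterlim_comp; [exact Hu|].
    apply (@filterlim_opp R_AbsRing R_NormedModule). }
  apply (proj2 (filterlim_C_components _ _)). split.
  - apply Hplus; [|apply Hopp]; apply Hmult; assumption.
  - apply Hplus; apply Hmult; assumption.
Qed.

End Limits.

Lemma is_derive_zero_const (h : R -> R) a b :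
  0 < a <= b -> (forall u, 0 < u -> is_derive h u 0) -> h b = h a.
Proof.
  intros Hab Hd.
  destruct (MVT_gen h a b (fun _ => 0)) as [x [_ Hx]].
  - intros x Hx. rewrite Rmin_left in Hx by lra. apply Hd. lra.
  - intros x Hx. rewrite Rmin_left in Hx by lra.
    apply continuity_pt_filterlim, (ex_derive_continuous h).
    exists 0. apply Hd. lra.
  - lra.
Qed.

Lemma is_derive_RC_zero_const (L : R -> C) T : 0 <= T ->
  (forall u, 0 < u -> is_derive_RC L u (RtoC 0)) ->
  filterlim L (within (fun u => 0 <= u) (locally 0)) (locally (L 0)) ->
  L T = L 0.
Proof.
  intros HT Hd Hc. destruct (Req_dec T 0) as [->|HT0]; [reflexivity|].
  assert (Hconst : forall u, 0 < u <= T -> L T = L u).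
  { intros u Hu. apply injective_projections.
    - apply (is_derive_zero_const (fun v => fst (L v))); [lra|].
      intros v Hv. exact (proj1 (proj1 (is_derive_RC_components L v _) (Hd v Hv))).
    - apply (is_derive_zero_const (fun v => snd (L v))); [lra|].
      intros v Hv. exact (proj2 (proj1 (is_derive_RC_components L v _) (Hd v Hv))). }
  apply (filterlim_locally_unique (F := at_right 0) L).
  - apply (filterlim_ext_loc (fun _ => L T)); [|apply filterlim_const].
    exists (mkposreal T ltac:(lra)). intros u Hu Hpos.
    apply Hconst. change (Rabs (u - 0) < T) in Hu. apply Rabs_def2 in Hu. lra.
  - eapply filterlim_filter_le_1; [|exact Hc].
    intros P HP. unfold at_right, within in *. revert HP. apply filter_imp.
    intros u HP Hu. apply HP. lra.
Qed.

Lemma upd_same (c : nat -> C) k : upd c k (c k) = c.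
Proof.
  apply functional_extensionality. intros i. unfold upd.
  destruct (Nat.eqb_spec i k); congruence.
Qed.

Section ConservedQuantities.

Variables (n : nat) (p : nat -> R -> C) (c psi : nat -> R -> C).

Hypothesis Hc : forall k, (1 <= k <= n)%nat -> cont_on_nonneg (c k).
Hypothesis Hpsi : forall k, (1 <= k <= n)%nat -> cont_on_nonneg (psi k).
Hypothesis Hdc : forall k t, (1 <= k <= n)%nat -> 0 < t ->
  is_derive_RC (c k) t (Fk p k (fun i => c i t) t).
Hypothesis Hdpsi : forall k t, (1 <= k <= n)%nat -> 0 < t ->
  exists D : C,
    is_C_derive (fun z => Ham n p (upd (fun i => c i t) k z) (fun i => psi i t) t) (c k t) D
    /\ is_derive_RC (psi k) t (- D)%C.

Lemma is_derive_psi k t : (1 <= k <= n)%nat -> 0 < t ->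
  is_derive_RC (psi k) t (- dHam p t n k (fun i => c i t) (fun i => psi i t))%C.
Proof.
  intros Hk Ht. destruct (Hdpsi k t Hk Ht) as [D [HD Hpsik]].
  pose proof (is_C_derive_Ham p t n (fun i => c i t) (fun i => psi i t) k (c k t)
    (proj1 Hk)) as HH.
  rewrite upd_same in HH.
  apply is_C_derive_unique in HD, HH. rewrite <- HH, HD. exact Hpsik.
Qed.

Lemma is_derive_ser j k t : (j <= k <= n)%nat -> 0 < t ->
  is_derive_RC (fun u => ser (fun i => c i u) (k - j)) t
    (Fk p (k - j) (fun i => c i t) t).
Proof.
  intros Hk Ht. destruct (k - j)%nat as [|q] eqn:Hq.
  - rewrite Fk_O. exact (@is_derive_const R_AbsRing C_R_NormedModule (RtoC 1) t).
  - apply Hdc; [lia|exact Ht].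
Qed.

(* The [psi]-equation contributes [- sum_k gen_k dH/dc_k] and the [c]-equation
   [sum_k (k-j+1) F_(k-j) psi_k]; they cancel by [sum_gen_dHam]. *)
Lemma is_derive_Lj j t : (1 <= j <= n)%nat -> 0 < t ->
  is_derive_RC (fun u => Lj n j (fun i => c i u) (fun i => psi i u)) t (RtoC 0).
Proof.
  intros Hj Ht.
  replace (RtoC 0) with (sum_n_m (fun k =>
      (RtoC 0 * ser (fun i => c i t) (k - j)
       + RtoC (INR (k - j + 1)) * Fk p (k - j) (fun i => c i t) t) * psi k t
      + RtoC (INR (k - j + 1)) * ser (fun i => c i t) (k - j)
        * (- dHam p t n k (fun i => c i t) (fun i => psi i t)))%C j n).
  - apply (@is_derive_sum_n_m R_AbsRing C_R_NormedModule). intros k Hk.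
    apply is_derive_RC_mult; [apply (is_derive_RC_mult (fun _ => RtoC (INR (k - j + 1))))|].
    + exact (@is_derive_const R_AbsRing C_R_NormedModule _ t).
    + apply is_derive_ser; [lia|exact Ht].
    + apply is_derive_psi; [lia|exact Ht].
  - rewrite (sum_n_m_ext_loc _ (fun k =>
        RtoC (INR (k - j + 1)) * Fk p (k - j) (fun i => c i t) t * psi k t
        + - (gen j (fun i => c i t) k * dHam p t n k (fun i => c i t) (fun i => psi i t)))%C)
      by (intros; unfold gen; Cring).
    rewrite sumC_plus, sumC_opp, sum_gen_dHam by lia. Cring.
Qed.

Lemma Lj_cont_on_nonneg j : (1 <= j <= n)%nat ->
  cont_on_nonneg (fun u => Lj n j (fun i => c i u) (fun i => psi i u)).
Proof.
  intros Hj t Ht. apply (@filterlim_sum_n_m _ _ _ R_AbsRing C_R_NormedModule).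
  intros k Hk. apply filterlim_Cmult; [apply filterlim_Cmult|].
  - apply filterlim_const.
  - destruct (k - j)%nat as [|q] eqn:Hq; [exact (filterlim_const (RtoC 1))|].
    apply Hc; [lia|exact Ht].
  - apply Hpsi; [lia|exact Ht].
Qed.

End ConservedQuantities.

Theorem mainTheorem5 (n : nat) (p : nat -> R -> C)
  (c psi : nat -> R -> C) :
  (1 <= n)%nat ->
  (forall m, (1 <= m <= n)%nat -> cont_on_nonneg (p m)) ->
  (forall k, (1 <= k <= n)%nat -> cont_on_nonneg (c k)) ->
  (forall k, (1 <= k <= n)%nat -> cont_on_nonneg (psi k)) ->
  (forall k t, (1 <= k <= n)%nat -> 0 < t ->
     is_derive (V := C_R_NormedModule) (c k) t
       (Fk p k (fun i => c i t) t)) ->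
  (forall k t, (1 <= k <= n)%nat -> 0 < t ->
     exists D : C,
       is_derive (K := C_AbsRing) (V := C_NormedModule)
         (fun z => Ham n p (upd (fun i => c i t) k z) (fun i => psi i t) t)
         (c k t) D
       /\ is_derive (V := C_R_NormedModule) (psi k) t (- D)%C) ->
  forall j t, (1 <= j <= n)%nat -> 0 <= t ->
    Lj n j (fun i => c i t) (fun i => psi i t)
    = Lj n j (fun i => c i 0) (fun i => psi i 0).
Proof.
  intros _ _ Hc Hpsi Hdc Hdpsi j t Hj Ht.
  apply (is_derive_RC_zero_const (fun u => Lj n j (fun i => c i u) (fun i => psi i u)) t Ht).
  - intros u Hu. exact (is_derive_Lj n p c psi Hdc Hdpsi j u Hj Hu).
  - exact (Lj_cont_on_nonneg n c psi Hc Hpsi j Hj 0 (Rle_refl 0)).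
Qed.
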